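(* Let $p$ be a prime and let $G$ be an abelian group in which every element has order $p^k$ for some $k\ge0$. Let $H=\{x\in G: px=0\}$. Then the map $\mathbb{P}(H)\to\mathbb{P}(G)$ induced by inclusion, $[x]_H\mapsto[x]_G$, is a bijection.
   Context: An abelian group is regarded as a $\mathbb{Z}$-module. For a $\mathbb{Z}$-module $M$ let $M^\circ=M\setminus\{0\}$; define $x\sim'y$ on $M^\circ$ if there exist $m\in M$ and $r,s\in\mathbb{Z}$ with $x=rm$, $y=sm$; let $\sim_M$ be the equivalence relation generated by $\sim'$; and let $\mathbb{P}(M)=M^\circ/\sim_M$, with $[x]_M$ the class of $x$. *)

From HB Require Import structures.
From mathcomp Require Import all_boot all_order all_algebra.
From Stdlib Require Import Relations.
Unset Printing Implicit Defensive.
Import GRing.Theory.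
Local Open Scope ring_scope.

Definition nonzero (M : zmodType) := {x : M | x != 0}.

Definition sim' (M : zmodType) (x y : nonzero M) : Prop :=
  exists (m : M) (r s : int), val x = m *~ r /\ val y = m *~ s.

Definition simM (M : zmodType) : relation (nonzero M) :=
  clos_refl_sym_trans (nonzero M) (sim' M).

Definition cls (M : zmodType) (x : nonzero M) : nonzero M -> Prop := simM M x.

Definition PP (M : zmodType) := {S : nonzero M -> Prop | exists x, S = cls M x}.

Definition PPcls (M : zmodType) (x : nonzero M) : PP M :=
  exist _ (cls M x) (ex_intro _ x erefl).

Definition ptors (G : zmodType) (p : nat) : G -> bool := fun x => x *+ p == 0.

Lemma ptors_zmod_closed (G : zmodType) (p : nat) : zmod_closed (ptors G p).
Proof.
split; first by rewrite unfold_in /ptors mul0rn.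
by move=> x y; rewrite !unfold_in /ptors mulrnBl => /eqP -> /eqP ->; rewrite subrr.
Qed.

HB.instance Definition _ (G : zmodType) (p : nat) :=
  GRing.isZmodClosed.Build G (ptors G p) (ptors_zmod_closed G p).

Definition ptorsT (G : zmodType) (p : nat) := {x : G | ptors G p x}.

HB.instance Definition _ (G : zmodType) (p : nat) :=
  [isSub for (@sval G (fun x => ptors G p x)) : ptorsT G p -> G].
HB.instance Definition _ (G : zmodType) (p : nat) :=
  [Choice of ptorsT G p by <:].
HB.instance Definition _ (G : zmodType) (p : nat) :=
  [SubChoice_isSubZmodule of ptorsT G p by <:].

From mathcomp Require Import all_boot all_order all_algebra.
From Stdlib Require Import Relations ClassicalEpsilon FunctionalExtensionality PropExtensionality ProofIrrelevance.
Import GRing.Theory.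
Local Open Scope ring_scope.

(* If x in G is nonzero of order p^n, the elements of order p in the cyclic
   p-group <x> are exactly the multiples of s(x) = p^(n-1) x.  Two
   ~'-related elements lie in a common <m>, so their images under s are
   multiples of s(m): s descends to a map P(G) -> P(H).  It fixes the points
   of H, and s(x) ~' x, so it is inverse to the map induced by inclusion. *)

Section ProjectiveClasses.

Variable M : zmodType.

Lemma PPcls_eq (x y : nonzero M) : simM M x y -> PPcls M x = PPcls M y.
Proof.
have [_ simM_trans simM_sym] := clos_rst_is_equiv _ (sim' M).
move=> xy; apply: subset_eq_compat; apply: functional_extensionality => z.
apply: propositional_extensionality; split; first by apply: simM_trans; apply: simM_sym.
exact: simM_trans.
Qed.

Lemma PPcls_sim (x y : nonzero M) : PPcls M x = PPcls M y -> simM M x y.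
Proof. by move/(congr1 sval) => /= xy; change (cls M x y); rewrite xy; apply: rst_refl. Qed.

Definition PPrepr (S : PP M) : nonzero M :=
  proj1_sig (constructive_indefinite_description _ (proj2_sig S)).

Lemma PPreprK (S : PP M) : PPcls M (PPrepr S) = S.
Proof.
case: S => S hS; rewrite /PPrepr /=.
by case: constructive_indefinite_description => x /= Sx; subst S; apply: subset_eq_compat.
Qed.

End ProjectiveClasses.

Arguments PPrepr {M}.
Arguments PPreprK {M}.

Section ProjectiveMaps.

Variables M N : zmodType.

Definition sim_preserving (f : nonzero M -> nonzero N) : Prop :=
  forall x y, sim' M x y -> simM N (f x) (f y).

Lemma simM_preserving (f : nonzero M -> nonzero N) :
  sim_preserving f -> forall x y, simM M x y -> simM N (f x) (f y).
Proof.
move=> hf x y; elim=> {x y} [x y xy | x | x y _ fxy | x y z _ fxy _ fyz].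
- exact: hf.
- exact: rst_refl.
- exact: rst_sym.
- exact: rst_trans fyz.
Qed.

Definition PPmap (f : nonzero M -> nonzero N) (S : PP M) : PP N :=
  PPcls N (f (PPrepr S)).

Lemma PPmap_cls (f : nonzero M -> nonzero N) (x : nonzero M) :
  sim_preserving f -> PPmap f (PPcls M x) = PPcls N (f x).
Proof.
move=> hf; apply: PPcls_eq; apply: simM_preserving hf _ _ _.
by apply: PPcls_sim; rewrite PPreprK.
Qed.

End ProjectiveMaps.

Arguments sim_preserving {M N}.
Arguments PPmap {M N}.
Arguments PPmap_cls {M N}.

Lemma PPmap_bij {M N : zmodType}
    {f : nonzero M -> nonzero N} {g : nonzero N -> nonzero M} :
  sim_preserving f -> sim_preserving g ->
  (forall x, simM M (g (f x)) x) -> (forall y, simM N (f (g y)) y) ->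
  bijective (PPmap f).
Proof.
move=> hf hg gf fg; exists (PPmap g) => S.
all: by rewrite -(PPreprK S) !PPmap_cls //; apply: PPcls_eq.
Qed.

Section PrimaryGroup.

Variables (p : nat) (G : zmodType).
Hypothesis p_prime : prime p.
Hypothesis G_primary : forall x : G, exists k, x *+ p ^ k = 0.

Let primary_ex (x : G) : exists k, x *+ p ^ k == 0.
Proof. by have [k xk] := G_primary x; exists k; apply/eqP. Qed.

Definition plog (x : G) : nat := ex_minn (primary_ex x).

Lemma plogP (x : G) : x *+ p ^ plog x = 0.
Proof. by rewrite /plog; case: ex_minnP => n /eqP. Qed.

Lemma plog_min (x : G) (k : nat) : x *+ p ^ k = 0 -> (plog x <= k)%N.
Proof. by rewrite /plog; case: ex_minnP => n _ nmin /eqP; apply: nmin. Qed.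

Lemma plog_eq0 (x : G) : (plog x == 0%N) = (x == 0).
Proof.
apply/eqP/eqP => [x0 | ->]; first by rewrite -[x]mulr1n -(expn0 p) -x0 plogP.
by apply/eqP; rewrite -leqn0; apply: plog_min; rewrite mul0rn.
Qed.

Lemma plog_ptors (x : G) : x != 0 -> ptors G p x -> plog x = 1%N.
Proof.
rewrite -plog_eq0 => x_neq0 /eqP px; apply/eqP; rewrite eqn_leq lt0n x_neq0 andbT.
by apply: plog_min; rewrite expn1.
Qed.

Lemma plog_dvdz (x : G) (w : int) : x *~ w = 0 -> ((p ^ plog x)%N%:Z %| w)%Z.
Proof.
move=> xw; have [u [v uv]] := Bezoutz w (p ^ plog x)%N.
have xg : x *~ gcdz w (p ^ plog x)%N = 0.
  by rewrite -uv mulrzDr (mulrC u) (mulrC v) !mulrzA xw -pmulrn plogP !mul0rz addr0.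
have [i i_le gE] : exists2 i, (i <= plog x)%N & gcdn `|w| (p ^ plog x) = (p ^ i)%N.
  by apply/dvdn_pfactor; rewrite // dvdn_gcdr.
have le_i : (plog x <= i)%N by apply: plog_min; rewrite -gE pmulrn.
have -> : plog x = i by apply/eqP; rewrite eqn_leq le_i i_le.
rewrite -gE; apply: dvdn_gcdl.
Qed.

Definition psocle (x : G) : G := x *+ p ^ (plog x).-1.

Lemma psocle_ptors (x : G) : ptors G p (psocle x).
Proof.
have [x0 | x_neq0] := eqVneq x 0; first by rewrite /ptors /psocle x0 !mul0rn.
rewrite /ptors /psocle -mulrnA -expnSr prednK ?plogP //.
by rewrite lt0n plog_eq0.
Qed.

Lemma psocle_eq0 (x : G) : (psocle x == 0) = (x == 0).
Proof.
apply/eqP/eqP => [x0 | ->]; last by rewrite /psocle mul0rn.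
apply/eqP; rewrite -plog_eq0 -leqn0.
by case: (plog x) (plog_min x _ x0) => // n; rewrite ltnn.
Qed.

Lemma psocle_id (x : G) : x != 0 -> ptors G p x -> psocle x = x.
Proof. by move=> x_neq0 px; rewrite /psocle plog_ptors. Qed.

Lemma ptors_cycle_psocle (m : G) (z : int) :
  ptors G p (m *~ z) -> exists t : int, m *~ z = psocle m *~ t.
Proof.
move=> /eqP; rewrite pmulrn -mulrzA => /plog_dvdz.
rewrite /psocle; case: (plog m) => [_ | n]; first by exists z; rewrite mulr1n.
rewrite expnSr PoszM dvdz_mul2r; last by rewrite eqz_nat -lt0n prime_gt0.
by move=> /dvdzP[t ->]; exists t; rewrite /= (mulrC t) mulrzA pmulrn.
Qed.

Lemma psocle_mulrz (m : G) (r : int) :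
  exists t : int, psocle (m *~ r) = psocle m *~ t.
Proof.
have def_s : psocle (m *~ r) = m *~ (r * (p ^ (plog (m *~ r)).-1)%N).
  by rewrite mulrzA -pmulrn.
by rewrite def_s; apply: ptors_cycle_psocle; rewrite -def_s psocle_ptors.
Qed.

Lemma nz_ptors_val (x : nonzero (ptorsT G p)) : val (val x) != 0.
Proof. by move: (valP x); rewrite -val_eqE. Qed.

Definition nz_incl (x : nonzero (ptorsT G p)) : nonzero G :=
  exist _ (val (val x)) (nz_ptors_val x).

Definition psocleT (x : G) : ptorsT G p := exist _ (psocle x) (psocle_ptors x).

Lemma psocleT_neq0 (x : G) : x != 0 -> psocleT x != 0.
Proof. by rewrite -val_eqE psocle_eq0. Qed.

Definition nz_psocle (x : nonzero G) : nonzero (ptorsT G p) :=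
  exist _ (psocleT (val x)) (psocleT_neq0 _ (valP x)).

Lemma nz_incl_preserving : sim_preserving nz_incl.
Proof.
move=> a b [m [r [s [ea eb]]]]; apply: rst_step.
by exists (val m), r, s; split; [rewrite /= ea | rewrite /= eb]; apply: (raddfMz val).
Qed.

Lemma nz_psocle_preserving : sim_preserving nz_psocle.
Proof.
move=> a b [m [r [s [ea eb]]]]; apply: rst_step.
have [ta ea'] := psocle_mulrz m r; have [tb eb'] := psocle_mulrz m s.
exists (psocleT m), ta, tb.
by split; apply: val_inj; rewrite (raddfMz val) /= ?ea ?eb.
Qed.

Lemma nz_inclK (x : nonzero (ptorsT G p)) : nz_psocle (nz_incl x) = x.
Proof. by do 2 apply: val_inj; rewrite /= psocle_id ?(nz_ptors_val x) ?(valP (val x)). Qed.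

Lemma nz_psocle_sim (x : nonzero G) : sim' G (nz_incl (nz_psocle x)) x.
Proof. by exists (val x), (p ^ (plog (val x)).-1)%N, 1; rewrite /= -pmulrn mulr1z. Qed.

End PrimaryGroup.

Theorem theorem4p11 (p : nat) (G : zmodType) :
  prime p ->
  (forall x : G, exists k : nat, x *+ (p ^ k) = 0) ->
  exists F : PP (ptorsT G p) -> PP G,
    (forall (x : nonzero (ptorsT G p)) (y : nonzero G),
        val (val x) = val y -> F (PPcls _ x) = PPcls _ y) /\
    bijective F.
Proof.
move=> p_prime G_primary; exists (PPmap (nz_incl p G)); split.
  move=> x y xy; rewrite PPmap_cls; last exact: nz_incl_preserving.
  by congr PPcls; apply: val_inj.
apply: (PPmap_bij (nz_incl_preserving p G) (nz_psocle_preserving _ _ p_prime G_primary)).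
  by move=> x; rewrite nz_inclK; apply: rst_refl.
by move=> y; apply: rst_step; apply: nz_psocle_sim.
Qed.
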